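(* There is an absolute constant $c>0$ such that for all integers $m\ge 2$ and $d\ge 1$, every Steiner $2$-TC-spanner of the directed hypergrid $\mathcal{H}_{m,d}$ has at least $c\cdot \dfrac{m^d(\ln m-1)^d}{(4\pi)^d}$ edges, i.e. the number of edges is $\Omega\big(m^d(\ln m-1)^d/(4\pi)^d\big)$.
   Context: For a positive integer $m$, $[m]=\{1,\dots,m\}$. The directed hypergrid $\mathcal{H}_{m,d}$ has vertex set $[m]^d$ and an edge $(x,y)$ whenever there is a unique $i\in[d]$ with $y_i-x_i=1$ and $y_j=x_j$ for all $j\ne i$; its reachability order is the dominance order ($x\preceq y$ iff $x_i\le y_i$ for all $i$). For a directed graph $G=(V,E)$ and integer $k\ge1$, a Steiner $k$-TC-spanner of $G$ is a directed graph $H=(V_H,E_H)$ with $V\subseteq V_H$ such that for all $u,v\in V$: if $v$ is reachable from $u$ in $G$ then $H$ contains a directed path from $u$ to $v$ of length at most $k$, and if $v$ is not reachable from $u$ in $G$ then $v$ is not reachable from $u$ in $H$. Vertices of $V_H\setminus V$ are Steiner vertices. $\ln$ is the natural logarithm. *)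

From mathcomp Require Import all_boot.
From Stdlib Require Import Reals.
Set Implicit Arguments. Unset Strict Implicit. Unset Printing Implicit Defensive.

(* Vertices of the hypergrid H_{m,d}: functions [d] -> [m], 0-indexed
   ('I_d -> 'I_m), i.e. [m]^d shifted by one in each coordinate. *)
Definition grid (m d : nat) : finType := {ffun 'I_d -> 'I_m}.

(* Edge (x,y) of H_{m,d}: a unique coordinate i with y_i - x_i = 1,
   all other coordinates equal (uniqueness is automatic). *)
Definition grid_edge (m d : nat) : rel (grid m d) :=
  fun x y => [exists i : 'I_d, (nat_of_ord (y i) == (x i).+1) &&
                               [forall j : 'I_d, (j != i) ==> (y j == x j)]].

Definition grid_reach (m d : nat) (x y : grid m d) : bool :=
  connect (@grid_edge m d) x y.

(* A directed graph H on vertex type T (an eqType; Steiner vertices allowed)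
   given by its (finite, duplicate-free) list of edges Es. *)
Definition edge_rel (T : eqType) (Es : seq (T * T)) : rel T :=
  fun a b => (a, b) \in Es.

(* a directed path in H from a to b of length (= number of edges) size p *)
Definition hpath (T : eqType) (Es : seq (T * T)) (a b : T) (p : seq T) : bool :=
  path (edge_rel Es) a p && (last a p == b).

Definition h_reach (T : eqType) (Es : seq (T * T)) (a b : T) : Prop :=
  exists p : seq T, hpath Es a b p.

(* H (with V embedded into V_H by the injection f) is a Steiner k-TC-spanner of H_{m,d} *)
Definition steiner_tc_spanner (k m d : nat) (T : eqType) (f : grid m d -> T)
    (Es : seq (T * T)) : Prop :=
  injective f /\
  (forall u v : grid m d,
     (grid_reach u v -> exists p : seq T, size p <= k /\ hpath Es (f u) (f v) p) /\
     (~~ grid_reach u v -> ~ h_reach Es (f u) (f v))).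

(* Weight each comparable pair x <= y of the hypergrid by
   w(x, y) = prod_i 1 / (y_i - x_i + 1).  The total weight factorises over the
   coordinates into (H_1 + ... + H_m)^d, H_k the harmonic numbers, and
   H_1 + ... + H_m is at least both m (ln m - 1) and 5m/4.

   In a Steiner 2-TC-spanner every pair x < y is either an edge or passes through
   a middle vertex w, and the grid vertices entering w and leaving w form a
   biclique of comparable pairs.  Pick t between the two sides and balance w(a, b)
   against prod_i sqrt(t_i - a_i + 1) and prod_i sqrt(b_i - t_i + 1): by
   1 <= r + 1/r and the one-dimensional estimate
   sum_j 1 / ((u + j) sqrt(j + 1)) <= 4 / sqrt u, the biclique weighs at most
   4^d (|in(w)| + |out(w)|).  Each edge is counted at most twice over all w, so
   (H_1 + ... + H_m)^d <= m^d + (1 + 2 4^d) |E|, whence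
   |E| >= (m (ln m - 1))^d / (15 4^d); the factor pi^d of the statement is slack. *)

From Stdlib Require Import Reals.
From mathcomp Require Import all_boot all_order all_algebra.
From mathcomp Require Import ring lra zify.
From mathcomp Require Import Rstruct.
Set Implicit Arguments. Unset Strict Implicit. Unset Printing Implicit Defensive.
Import Order.TTheory GRing.Theory Num.Theory.

(** * The dominance order on the grid *)

Definition grid_le m d (x y : grid m d) : bool := [forall i, x i <= y i].

Section GridOrder.
Variables m d : nat.
Implicit Types x y : grid m d.

Lemma grid_edge_le x y : grid_edge x y -> grid_le x y.
Proof.
move=> /existsP [i /andP [/eqP yi /forallP yj]]; apply/forallP => j.
have [->|ne_ji] := eqVneq j i; first by rewrite yi.
by move: (yj j); rewrite ne_ji => /eqP ->.
Qed.

Lemma grid_le_trans y x z : grid_le x y -> grid_le y z -> grid_le x z.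
Proof.
move=> /forallP le_xy /forallP le_yz; apply/forallP => i.
exact: leq_trans (le_xy i) (le_yz i).
Qed.

Lemma grid_reach_le x y : grid_reach x y -> grid_le x y.
Proof.
move=> /connectP [p]; elim: p x => [|z p IHp] x /=.
  by move=> _ ->; apply/forallP.
move=> /andP [/grid_edge_le le_xz p_z] y_last.
exact: grid_le_trans le_xz (IHp z p_z y_last).
Qed.

Lemma grid_le_reach x y : grid_le x y -> grid_reach x y.
Proof.
have [n] := ubnP (\sum_i (y i - x i)); elim: n x => // n IHn x lt_n le_xy.
have [/existsP [i lt_i] | ] := boolP [exists i, x i < y i]; last first.
  rewrite negb_exists => /forallP ge_xy.
  suff -> : x = y by apply: connect0.
  apply/ffunP => i; apply/val_inj/eqP.
  by rewrite eqn_leq (forallP le_xy i) leqNgt ge_xy.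
have lt_im : (x i).+1 < m by apply: leq_ltn_trans lt_i (ltn_ord (y i)).
pose x' : grid m d := [ffun j => if j == i then Ordinal lt_im else x j].
have edge_xx' : grid_edge x x'.
  apply/existsP; exists i; rewrite /x' ffunE eqxx eqxx /=.
  by apply/forallP => j; apply/implyP => ne_ji; rewrite ffunE (negbTE ne_ji).
have lt_sum : \sum_j (y j - x' j) < \sum_j (y j - x j).
  rewrite [X in _ < X](bigD1 i) // [X in X < _](bigD1 i) //= {1}/x' ffunE eqxx /=.
  rewrite -addSn subnSK // leq_add2l; apply/eq_leq/eq_bigr => j ne_ji.
  by rewrite ffunE (negbTE ne_ji).
apply: connect_trans (connect1 edge_xx') (IHn _ _ _); first lia.
apply/forallP => j; rewrite /x' ffunE; case: eqVneq => [-> //|_].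
exact: (forallP le_xy j).
Qed.

Lemma grid_reachE x y : grid_reach x y = grid_le x y.
Proof. by apply/idP/idP; [apply: grid_reach_le | apply: grid_le_reach]. Qed.

End GridOrder.

Local Open Scope ring_scope.

(** * One-dimensional sums *)

Section SqrtSums.
Variable R : rcfType.

Definition nsqrt (n : nat) : R := Num.sqrt n%:R.

Lemma nsqrt_ge0 n : 0 <= nsqrt n. Proof. exact: sqrtr_ge0. Qed.

Lemma nsqrt_gt0 n : (0 < n)%N -> 0 < nsqrt n.
Proof. by move=> n_gt0; rewrite /nsqrt sqrtr_gt0 ltr0n. Qed.

Lemma sqr_nsqrt n : nsqrt n ^+ 2 = n%:R.
Proof. by rewrite /nsqrt sqr_sqrtr // ler0n. Qed.

Lemma nsqrt0 : nsqrt 0 = 0. Proof. by rewrite /nsqrt sqrtr0. Qed.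

Lemma inv_nsqrtS_le n : (nsqrt n.+1)^-1 <= 2 * (nsqrt n.+1 - nsqrt n).
Proof.
set a := nsqrt n; set b := nsqrt n.+1.
have a_ge0 : 0 <= a := nsqrt_ge0 n; have b_gt0 : 0 < b := nsqrt_gt0 (ltn0Sn n).
have sqrS : b ^+ 2 = a ^+ 2 + 1 by rewrite !sqr_nsqrt -natr1.
have -> : 2 * (b - a) = b^-1 + (2 * b * (b - a) - 1) / b.
  by field; apply/lt0r_neq0.
(* [2 b (b - a) - 1 = (b - a)^2] since [b^2 = a^2 + 1] *)
by rewrite lerDl divr_ge0 ?ltW //; nra.
Qed.

Lemma inv_nsqrtS_cube_le n : (0 < n)%N ->
  (nsqrt n.+1 ^+ 3)^-1 <= 2 * ((nsqrt n)^-1 - (nsqrt n.+1)^-1).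
Proof.
move=> n_gt0; set a := nsqrt n; set b := nsqrt n.+1.
have a_gt0 : 0 < a := nsqrt_gt0 n_gt0; have b_gt0 : 0 < b := nsqrt_gt0 (ltn0Sn n).
have sqrS : b ^+ 2 = a ^+ 2 + 1 by rewrite !sqr_nsqrt -natr1.
have lt_ab : a < b by nra.
have -> : 2 * (a^-1 - b^-1) = (b ^+ 3)^-1 + (2 * b ^+ 2 * (b - a) - a) / (a * b ^+ 3).
  by field; apply/andP; split; apply/lt0r_neq0.
rewrite lerDl divr_ge0 // ?mulr_ge0 ?exprn_ge0 ?ltW //.
have : 0 <= (b - a) * (b * (b - a) + 1) by apply: mulr_ge0; nra.
nra.
Qed.

Lemma sum_inv_nsqrt_le n : \sum_(0 <= j < n) (nsqrt j.+1)^-1 <= 2 * nsqrt n.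
Proof.
have le_tel := ler_sum_nat (fun j (_ : (0 <= j < n)%N) => inv_nsqrtS_le j).
apply: le_trans le_tel _.
by rewrite -mulr_sumr telescope_sumr // nsqrt0 subr0.
Qed.

Lemma sum_inv_nsqrt_cube_le u n : (0 < u)%N ->
  \sum_(u <= j < n) (nsqrt j.+1 ^+ 3)^-1 <= 2 / nsqrt u.
Proof.
move=> u_gt0; have su_gt0 := nsqrt_gt0 u_gt0.
have [le_un | lt_nu] := leqP u n; last first.
  rewrite big_geq; last exact: ltnW.
  by rewrite divr_ge0 // ltW.
have le_tel := ler_sum_nat (fun j (uj : (u <= j < n)%N) =>
  inv_nsqrtS_cube_le (leq_trans u_gt0 (proj1 (andP uj)))).
apply: le_trans le_tel _.
rewrite -mulr_sumr (telescope_sumr_eq (fun j => - (nsqrt j)^-1) _ le_un); last first.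
  by move=> j _; rewrite opprK addrC.
rewrite opprK ler_pM2l // gerDr oppr_le0 invr_ge0; exact: nsqrt_ge0.
Qed.

Lemma sum_inv_shift_nsqrt_le u n : (0 < u)%N ->
  \sum_(0 <= j < n) ((u + j)%:R * nsqrt j.+1)^-1 <= 4 / nsqrt u.
Proof.
move=> u_gt0; have su_gt0 := nsqrt_gt0 u_gt0.
have u_gt0R : 0 < u%:R :> R by rewrite ltr0n.
set F := fun j => ((u + j)%:R * nsqrt j.+1)^-1.
have F_ge0 j : 0 <= F j.
  by rewrite invr_ge0 mulr_ge0 // ?ler0n // nsqrt_ge0.
have extend : \sum_(0 <= j < n) F j <= \sum_(0 <= j < u + n) F j.
  rewrite (big_cat_nat (leq0n n) (leq_addl u n)) /= lerDl.
  exact: sumr_ge0.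
(* Split at [u]: a term with [j < u] is at most [1 / (u sqrt (j + 1))],
   one with [u <= j] at most [(j + 1)^(-3/2)]. *)
apply: le_trans extend _; rewrite (big_cat_nat (leq0n u) (leq_addr n u)) /=.
have -> : 4 / nsqrt u = 2 / nsqrt u + 2 / nsqrt u by field; apply/lt0r_neq0.
apply: lerD.
  have le_head j : F j <= u%:R^-1 * (nsqrt j.+1)^-1.
    rewrite /F invfM ler_pM2r; last by rewrite invr_gt0 nsqrt_gt0.
    by rewrite lef_pV2 ?posrE ?ltr0n ?addn_gt0 ?u_gt0 // ler_nat leq_addr.
  apply: le_trans (ler_sum_nat (fun j _ => le_head j)) _.
  rewrite -mulr_sumr; apply: le_trans (ler_wpM2l _ (sum_inv_nsqrt_le u)) _.
    by rewrite invr_ge0 ltW.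
  rewrite -[X in X^-1 * _](sqr_nsqrt u).
  suff -> : (nsqrt u ^+ 2)^-1 * (2 * nsqrt u) = 2 / nsqrt u by [].
  by field; exact/lt0r_neq0.
have le_tail j : (u <= j)%N -> F j <= (nsqrt j.+1 ^+ 3)^-1.
  move=> le_uj; have sj_gt0 : 0 < nsqrt j.+1 := nsqrt_gt0 (ltn0Sn j).
  rewrite /F lef_pV2 ?posrE ?exprn_gt0 //; last by rewrite mulr_gt0 // ltr0n addn_gt0 u_gt0.
  by rewrite exprSr sqr_nsqrt ler_pM2r // ler_nat addnC -addn1 leq_add2l.
apply: le_trans (sum_inv_nsqrt_cube_le (u + n) u_gt0).
exact: ler_sum_nat (fun j uj => le_tail j (proj1 (andP uj))).
Qed.

End SqrtSums.

Section GapWeights.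
Variable R : rcfType.

Definition gap_weight (a c : nat) : R := ((c - a).+1%:R)^-1.

Lemma gap_weight_ge0 a c : 0 <= gap_weight a c.
Proof. by rewrite invr_ge0 ler0n. Qed.

Lemma gap_weight_le1 a c : gap_weight a c <= 1.
Proof. by rewrite invf_le1 ?ltr0n // ler1n. Qed.

Lemma sum_gap_weight_above m a t : (a <= t)%N ->
  \sum_(c < m | (t <= c)%N) gap_weight a c / nsqrt R (c - t).+1 <= 4 / nsqrt R (t - a).+1.
Proof.
move=> le_at.
have -> : \sum_(c < m | (t <= c)%N) gap_weight a c / nsqrt R (c - t).+1 =
          \sum_(0 + t <= c < m) gap_weight a c / nsqrt R (c - t).+1.
  by rewrite add0n big_geq_mkord.
rewrite big_addn (eq_bigr (fun j => (((t - a).+1 + j)%:R * nsqrt R j.+1)^-1)).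
  exact: sum_inv_shift_nsqrt_le.
move=> j _; rewrite invfM addnK; congr (_^-1 * _); congr (_%:R); lia.
Qed.

Lemma sum_gap_weight_below m b (t : 'I_m) : (t <= b)%N ->
  \sum_(c < m | (c <= t)%N) gap_weight c b / nsqrt R (t - c).+1 <= 4 / nsqrt R (b - t).+1.
Proof.
move=> le_tb.
have -> : \sum_(c < m | (c <= t)%N) gap_weight c b / nsqrt R (t - c).+1 =
          \sum_(0 <= c < t.+1) gap_weight c b / nsqrt R (t - c).+1.
  rewrite (big_nat_widen _ _ _ _ _ (ltn_ord t)) big_mkord.
  by apply: eq_bigl => c; rewrite ltnS.
rewrite big_nat_rev /=.
have -> : \sum_(0 <= j < t.+1)
    gap_weight (0 + t.+1 - j.+1) b / nsqrt R (t - (0 + t.+1 - j.+1)).+1 =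
    \sum_(0 <= j < t.+1) (((b - t).+1 + j)%:R * nsqrt R j.+1)^-1.
  apply: eq_big_nat => j /andP [_ lt_jt].
  rewrite /gap_weight invfM add0n subSS subKn; last by rewrite -ltnS.
  by congr (_^-1 * _); congr (_%:R); lia.
exact: sum_inv_shift_nsqrt_le.
Qed.

End GapWeights.

(** * Weights of comparable pairs *)

Lemma prodr_if_forall (R : comPzSemiRingType) (I : finType) (P : pred I) (F : I -> R) :
  \prod_i (if P i then F i else 0) = if [forall i, P i] then \prod_i F i else 0.
Proof.
have [/forallP P_all | ] := boolP [forall i, P i].
  by apply: eq_bigr => i _; rewrite P_all.
rewrite negb_forall => /existsP [i nPi].
by rewrite (bigD1 i) //= (negbTE nPi) mul0r.
Qed.

Lemma bigA_distr_bigA_cond (R : comPzSemiRingType) (I J : finType)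
    (P : I -> pred J) (F : I -> J -> R) :
  \prod_i \sum_(j | P i j) F i j =
  \sum_(g : {ffun I -> J} | [forall i, P i (g i)]) \prod_i F i (g i).
Proof.
under eq_bigr => i _ do rewrite big_mkcond /=.
rewrite bigA_distr_bigA [RHS]big_mkcond /=; apply: eq_bigr => g _.
exact: prodr_if_forall.
Qed.

Lemma ler_sum_subset (R : numDomainType) (I : finType) (P Q : pred I) (F : I -> R) :
  (forall i, P i -> Q i) -> (forall i, 0 <= F i) -> \sum_(i | P i) F i <= \sum_(i | Q i) F i.
Proof.
move=> sub_PQ F_ge0.
have -> : \sum_(i | P i) F i = \sum_(i | Q i && P i) F i.
  by apply: eq_bigl => i; case: (boolP (P i)) => [/sub_PQ -> | _]; rewrite ?andbF.
by rewrite [X in _ <= X](bigID P) /= lerDl sumr_ge0.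
Qed.

Lemma le1_addr_inv (R : realFieldType) (r : R) : 0 < r -> 1 <= r + r^-1.
Proof.
move=> r_gt0; have [le1r | ltr1] := lerP 1 r.
  by rewrite -[1]addr0 lerD // invr_ge0 ltW.
have : 1 <= r^-1 by rewrite invf_ge1 // ltW.
lra.
Qed.

Section GridWeights.
Variable R : rcfType.
Variables m d : nat.
Implicit Types a b t x y : grid m d.

Definition weight x y : R := \prod_i gap_weight R (x i) (y i).
Definition sqrt_gap x y : R := \prod_i nsqrt R (y i - x i).+1.

Lemma weight_ge0 x y : 0 <= weight x y.
Proof. by apply: prodr_ge0 => i _; apply: gap_weight_ge0. Qed.

Lemma weight_le1 x y : weight x y <= 1.
Proof.
have : weight x y <= \prod_(i < d) (1 : R).
  by apply: ler_prod => i _; rewrite gap_weight_ge0 gap_weight_le1.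
by rewrite big1_eq.
Qed.

Lemma sqrt_gap_gt0 x y : 0 < sqrt_gap x y.
Proof. by apply: prodr_gt0 => i _; apply: nsqrt_gt0. Qed.

Lemma sum_weight_above a t : grid_le a t ->
  \sum_(b | grid_le t b) weight a b / sqrt_gap t b <= 4 ^+ d / sqrt_gap a t.
Proof.
move=> /forallP le_at.
have -> : \sum_(b | grid_le t b) weight a b / sqrt_gap t b =
    \prod_i \sum_(c : 'I_m | (t i <= c)%N) gap_weight R (a i) c / nsqrt R (c - t i).+1.
  by rewrite bigA_distr_bigA_cond; apply: eq_bigr => b _; rewrite -prodf_div.
rewrite -[d in 4 ^+ d]card_ord -prodr_const -prodf_div; apply: ler_prod => i _.
rewrite sumr_ge0 ?sum_gap_weight_above // => c _.
by rewrite divr_ge0 ?gap_weight_ge0 ?nsqrt_ge0.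
Qed.

Lemma sum_weight_below b t : grid_le t b ->
  \sum_(a | grid_le a t) weight a b / sqrt_gap a t <= 4 ^+ d / sqrt_gap t b.
Proof.
move=> /forallP le_tb.
have -> : \sum_(a | grid_le a t) weight a b / sqrt_gap a t =
    \prod_i \sum_(c : 'I_m | (c <= t i)%N) gap_weight R c (b i) / nsqrt R (t i - c).+1.
  by rewrite bigA_distr_bigA_cond; apply: eq_bigr => a _; rewrite -prodf_div.
rewrite -[d in 4 ^+ d]card_ord -prodr_const -prodf_div; apply: ler_prod => i _.
rewrite sumr_ge0 ?sum_gap_weight_below // => c _.
by rewrite divr_ge0 ?gap_weight_ge0 ?nsqrt_ge0.
Qed.

Lemma exists_grid_between (A B : {set grid m d}) a0 : a0 \in A ->
    (forall a b, a \in A -> b \in B -> grid_le a b) ->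
  exists t, (forall a, a \in A -> grid_le a t) /\ (forall b, b \in B -> grid_le t b).
Proof.
move=> A_a0 le_AB; pose top i := [arg max_(a > a0 in A) (a i : nat)].
exists [ffun i => top i i]; split.
  move=> a A_a; apply/forallP => i; rewrite ffunE /top.
  by case: arg_maxnP => // a' _; apply.
move=> b B_b; apply/forallP => i; rewrite ffunE /top.
by case: arg_maxnP => // a' A_a' _; apply: (forallP (le_AB _ _ A_a' B_b)).
Qed.

Lemma sum_weight_biclique (A B : {set grid m d}) :
    (forall a b, a \in A -> b \in B -> grid_le a b) ->
  \sum_(a in A) \sum_(b in B) weight a b <= 4 ^+ d * (#|A|%:R + #|B|%:R).
Proof.
move=> le_AB; have four_d_ge0 : 0 <= 4 ^+ d :> R by rewrite exprn_ge0.
have [-> | [a0 A_a0]] := set_0Vmem A.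
  by rewrite big_set0; apply: mulr_ge0 => //; apply: addr_ge0; apply: ler0n.
have [t [le_At le_tB]] := exists_grid_between A_a0 le_AB.
pose P a := sqrt_gap a t; pose Q b := sqrt_gap t b.
have P_gt0 a : 0 < P a := sqrt_gap_gt0 a t.
have Q_gt0 b : 0 < Q b := sqrt_gap_gt0 t b.
(* [1 <= r + 1/r] for [r = P a / Q b] *)
have split_weight a b : weight a b <= P a * (weight a b / Q b) + Q b * (weight a b / P a).
  have r_gt0 : 0 < P a / Q b by rewrite divr_gt0.
  have -> : P a * (weight a b / Q b) + Q b * (weight a b / P a) =
      weight a b * (P a / Q b + (P a / Q b)^-1).
    by rewrite invf_div; field; apply/andP; split; apply/lt0r_neq0.
  by rewrite ler_peMr ?weight_ge0 ?le1_addr_inv.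
apply: (@le_trans _ _ (\sum_(a in A) \sum_(b in B)
    (P a * (weight a b / Q b) + Q b * (weight a b / P a)))).
  by apply: ler_sum => a _; apply: ler_sum => b _; apply: split_weight.
under eq_bigr do rewrite big_split; rewrite big_split /= mulrDr.
apply: lerD.
  rewrite mulr_natr -sumr_const; apply: ler_sum => a A_a; rewrite -mulr_sumr.
  have -> : 4 ^+ d = P a * (4 ^+ d / P a) by field; apply/lt0r_neq0.
  rewrite ler_pM2l // ; apply: le_trans (sum_weight_above (le_At a A_a)).
  apply: ler_sum_subset => [b /le_tB // | b]; exact: divr_ge0 (weight_ge0 _ _) (ltW (Q_gt0 b)).
rewrite exchange_big mulr_natr -sumr_const; apply: ler_sum => b B_b; rewrite -mulr_sumr.
have -> : 4 ^+ d = Q b * (4 ^+ d / Q b) by field; apply/lt0r_neq0.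
rewrite ler_pM2l //; apply: le_trans (sum_weight_below (le_tB b B_b)).
apply: ler_sum_subset => [a /le_At // | a]; exact: divr_ge0 (weight_ge0 _ _) (ltW (P_gt0 a)).
Qed.

End GridWeights.

Section Harmonic.
Variable R : realFieldType.

Definition harmonic n : R := \sum_(k < n) (k.+1%:R)^-1.

Lemma harmonicS n : harmonic n.+1 = harmonic n + (n.+1%:R)^-1.
Proof. by rewrite /harmonic big_ord_recr. Qed.

Lemma harmonic_leS n : harmonic n <= harmonic n.+1.
Proof. by rewrite harmonicS lerDl invr_ge0 ler0n. Qed.

Lemma harmonic_ge3half n : 3 / 2 <= harmonic n.+2.
Proof.
elim: n => [|n IHn]; last exact: le_trans IHn (harmonic_leS _).
rewrite !harmonicS /harmonic big_ord0 add0r invr1.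
lra.
Qed.

Lemma sum_harmonic_ge m : (2 <= m)%N -> 5 / 4 * m%:R <= \sum_(c < m) harmonic c.+1.
Proof.
case: m => [|[|m]] // _; rewrite big_ord_recl /=.
have -> : harmonic 1 = 1 by rewrite harmonicS /harmonic big_ord0 add0r invr1.
have : \sum_(i < m.+1) (3 / 2 : R) <= \sum_(i < m.+1) harmonic (bump 0 i).+1.
  by apply: ler_sum => i _; apply: harmonic_ge3half.
rewrite sumr_const card_ord -mulr_natr -[m.+2]addn1 natrD.
have : (1 : R) <= m.+1%:R by rewrite ler1n.
lra.
Qed.

End Harmonic.

Lemma sum_gap_weight (R : rcfType) m :
  \sum_(a < m) \sum_(c < m | (a <= c)%N) gap_weight R a c = \sum_(c < m) harmonic R c.+1.
Proof.
under eq_bigr do rewrite big_mkcond /=.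
rewrite exchange_big /=; apply: eq_bigr => c _; rewrite -big_mkcond /=.
have -> : \sum_(a < m | (a <= c)%N) gap_weight R a c = \sum_(a < c.+1) gap_weight R a c.
  by rewrite (big_ord_widen_cond m xpredT (fun a => gap_weight R a c) (ltn_ord c)).
rewrite /harmonic (reindex_inj rev_ord_inj) /=; apply: eq_bigr => a _.
by rewrite /gap_weight subSS subKn // -ltnS.
Qed.

Definition total_weight (R : rcfType) m d : R :=
  \sum_(x : grid m d) \sum_(y | grid_le x y) weight R x y.

Lemma total_weightE (R : rcfType) m d :
  total_weight R m d = (\sum_(c < m) harmonic R c.+1) ^+ d.
Proof.
rewrite -sum_gap_weight -[d in _ ^+ d]card_ord -prodr_const bigA_distr_bigA /=.
by apply: eq_bigr => x _; rewrite bigA_distr_bigA_cond.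
Qed.

(** * Counting the edges of a spanner *)

Lemma card_inj_mem_le (X : finType) (T : eqType) (g : X -> T) (s : seq T) :
  injective g -> (#|[pred x | g x \in s]| <= size s)%N.
Proof.
move=> inj_g; rewrite cardE -(size_map g); apply: uniq_leq_size.
  by rewrite map_inj_uniq ?enum_uniq.
by move=> y /mapP [x]; rewrite mem_enum => gx_s ->.
Qed.

Lemma sum_count_eq_le (I : eqType) (T : Type) (h : T -> I) (W : seq I) (s : seq T) :
  uniq W -> (\sum_(w <- W) count (fun e => h e == w) s <= size s)%N.
Proof.
move=> uniq_W; elim: s => [|e s IHs] /=; first by rewrite big1.
rewrite big_split /= -add1n leq_add //.
have -> : (\sum_(w <- W) (h e == w) = count_mem (h e) W)%N.
  rewrite -sum1_count [RHS]big_mkcond /=; apply: eq_bigr => w _.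
  by rewrite eq_sym; case: (w == h e).
by rewrite count_uniq_mem // leq_b1.
Qed.

Section Spanner.
Variables (R : rcfType) (m d : nat) (T : eqType) (f : grid m d -> T) (Es : seq (T * T)).
Hypothesis spanner : steiner_tc_spanner 2 f Es.
Implicit Types x y : grid m d.

Let hubs := undup (map snd Es).
Let in_nbrs w := [set x | (f x, w) \in Es].
Let out_nbrs w := [set y | (w, f y) \in Es].

Lemma spanner_inj : injective f.
Proof. by case: spanner. Qed.

Lemma spanner_cover x y : grid_le x y ->
  [\/ x = y, (f x, f y) \in Es | exists2 w, (f x, w) \in Es & (w, f y) \in Es].
Proof.
rewrite -grid_reachE => reach_xy.
have [p [size_p path_p]] := proj1 (proj2 spanner x y) reach_xy.
move: path_p; rewrite /hpath; case: p size_p => [|z [|z' [|? ?]]] //= _.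
- by move=> /eqP /spanner_inj ->; apply: Or31.
- by rewrite /edge_rel andbT => /andP [e /eqP <-]; apply: Or32.
- rewrite /edge_rel andbT => /andP [/andP [e1 e2] /eqP e3].
  by apply: Or33; exists z; rewrite // -e3.
Qed.

Lemma hub_grid_le w a b : (f a, w) \in Es -> (w, f b) \in Es -> grid_le a b.
Proof.
move=> e1 e2; rewrite -grid_reachE; apply/negPn/negP => unreach.
apply: (proj2 (proj2 spanner a b) unreach); exists [:: w; f b].
by rewrite /hpath /= /edge_rel e1 e2 eqxx.
Qed.

Lemma sum_card_in_nbrs : (\sum_(w <- hubs) #|in_nbrs w| <= size Es)%N.
Proof.
apply: leq_trans (sum_count_eq_le snd Es (undup_uniq _)); apply: leq_sum => w _.
rewrite -size_filter (eq_card (B := [pred x | (f x, w) \in [seq e <- Es | e.2 == w]])).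
  by apply: card_inj_mem_le => x y [] /spanner_inj.
by move=> x; rewrite !inE mem_filter eqxx.
Qed.

Lemma sum_card_out_nbrs : (\sum_(w <- hubs) #|out_nbrs w| <= size Es)%N.
Proof.
apply: leq_trans (sum_count_eq_le fst Es (undup_uniq _)); apply: leq_sum => w _.
rewrite -size_filter (eq_card (B := [pred y | (w, f y) \in [seq e <- Es | e.1 == w]])).
  by apply: card_inj_mem_le => x y [] /spanner_inj.
by move=> y; rewrite !inE mem_filter eqxx.
Qed.

Lemma sum_direct_edges_le :
  \sum_x \sum_y ((f x, f y) \in Es)%:R <= (size Es)%:R :> R.
Proof.
rewrite pair_bigA /= -natr_sum ler_nat.
have -> : (\sum_(p : grid m d * grid m d) ((f p.1, f p.2) \in Es) =
          #|[pred p : grid m d * grid m d | (f p.1, f p.2) \in Es]|)%N.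
  rewrite -sum1_card [RHS]big_mkcond /=; apply: eq_bigr => p _.
  by rewrite inE; case: ((f p.1, f p.2) \in Es).
by apply: card_inj_mem_le => -[x1 y1] [x2 y2] /= [/spanner_inj -> /spanner_inj ->].
Qed.

Lemma sum_hub_weight_le :
  \sum_x \sum_y \sum_(w <- hubs) (((f x, w) \in Es) && ((w, f y) \in Es))%:R * weight R x y
    <= 2 * 4 ^+ d * (size Es)%:R.
Proof.
have -> : \sum_x \sum_y \sum_(w <- hubs)
      (((f x, w) \in Es) && ((w, f y) \in Es))%:R * weight R x y =
    \sum_(w <- hubs) \sum_(x in in_nbrs w) \sum_(y in out_nbrs w) weight R x y.
  under eq_bigr do rewrite exchange_big; rewrite exchange_big /=.
  apply: eq_bigr => w _; rewrite [RHS]big_mkcond; apply: eq_bigr => x _.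
  rewrite inE; case: ((f x, w) \in Es) => /=; last by rewrite big1 // => y _; rewrite mul0r.
  rewrite [RHS]big_mkcond; apply: eq_bigr => y _; rewrite inE.
  by case: ((w, f y) \in Es); rewrite ?mul1r ?mul0r.
apply: (@le_trans _ _ (\sum_(w <- hubs) 4 ^+ d * (#|in_nbrs w|%:R + #|out_nbrs w|%:R))).
  apply: ler_sum => w _; apply: sum_weight_biclique => a b.
  by rewrite !inE; apply: hub_grid_le.
rewrite -mulr_sumr big_split /= -!natr_sum [2 * _]mulrC -mulrA ler_pM2l ?exprn_gt0 //.
have le_in : (\sum_(w <- hubs) #|in_nbrs w|)%:R <= (size Es)%:R :> R.
  by rewrite ler_nat sum_card_in_nbrs.
have le_out : (\sum_(w <- hubs) #|out_nbrs w|)%:R <= (size Es)%:R :> R.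
  by rewrite ler_nat sum_card_out_nbrs.
lra.
Qed.

Lemma total_weight_le_spanner_size :
  total_weight R m d <= (m ^ d)%:R + (1 + 2 * 4 ^+ d) * (size Es)%:R.
Proof.
pose hub_term (x y : grid m d) w :=
  (((f x, w) \in Es) && ((w, f y) \in Es))%:R * weight R x y.
pose cover (x y : grid m d) :=
  (x == y)%:R + ((f x, f y) \in Es)%:R + \sum_(w <- hubs) hub_term x y w.
have hub_term_ge0 x y w : 0 <= hub_term x y w by rewrite mulr_ge0 ?ler0n ?weight_ge0.
have cover_ge0 x y : 0 <= cover x y by rewrite !addr_ge0 ?ler0n ?sumr_ge0.
have weight_le_cover x y : grid_le x y -> weight R x y <= cover x y.
  have diag_ge0 : 0 <= (x == y)%:R :> R := ler0n _ _.
  have direct_ge0 : 0 <= ((f x, f y) \in Es)%:R :> R := ler0n _ _.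
  have hubs_ge0 : 0 <= \sum_(w <- hubs) hub_term x y w by apply: sumr_ge0.
  have := weight_le1 R x y; rewrite /cover => weight_le1.
  case/spanner_cover => [/eqP -> | -> | [w e1 e2]] /=; try lra.
  have hub_w : w \in hubs by rewrite mem_undup; apply/mapP; exists (f x, w).
  rewrite (bigD1_seq w) ?undup_uniq //= {1}/hub_term e1 e2 mul1r.
  have : 0 <= \sum_(w' <- hubs | w' != w) hub_term x y w' by apply: sumr_ge0.
  lra.
apply: (@le_trans _ _ (\sum_x \sum_y cover x y)).
  rewrite /total_weight; apply: ler_sum => x _.
  apply: (@le_trans _ _ (\sum_(y | grid_le x y) cover x y)).
    by apply: ler_sum => y; apply: weight_le_cover.
  exact: ler_sum_subset.
rewrite /cover; under eq_bigr do rewrite !big_split; rewrite !big_split /=.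
have -> : \sum_(x : grid m d) \sum_(y : grid m d) (x == y)%:R = (m ^ d)%:R :> R.
  have diag (x : grid m d) : \sum_(y : grid m d) (x == y)%:R = 1 :> R.
    by rewrite (bigD1 x) //= eqxx big1 ?addr0 // => y ne_yx; rewrite eq_sym (negbTE ne_yx).
  by under eq_bigr do rewrite diag; rewrite sumr_const card_ffun !card_ord.
have := sum_direct_edges_le; have := sum_hub_weight_le.
lra.
Qed.

End Spanner.

(** * Logarithmic bounds *)

Lemma ln_le_subr1 (z : R) : 0 < z -> ln z <= z - 1.
Proof.
move=> /RltP z_gt0; apply/RleP; apply: Rnot_lt_le => /exp_increasing.
rewrite exp_ln // => /RltP lt_exp.
have /RleP := exp_ineq1_le (z - 1); rewrite RplusE RminusE.
lra.
Qed.

Lemma ln_natS_sub_le n : ln n.+2%:R - ln n.+1%:R <= (n.+1%:R)^-1 :> R.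
Proof.
have n1_gt0 : 0 < n.+1%:R :> R by rewrite ltr0n.
have n2_gt0 : 0 < n.+2%:R :> R by rewrite ltr0n.
have inv_gt0 : 0 < (n.+1%:R)^-1 :> R by rewrite invr_gt0.
have := ln_mult _ _ (elimT RltP n2_gt0) (elimT RltP inv_gt0).
rewrite RmultE RplusE ln_Rinv; last exact/RltP.
rewrite RoppE => <-.
apply: le_trans (ln_le_subr1 (divr_gt0 n2_gt0 n1_gt0)) _.
suff -> : n.+2%:R / n.+1%:R - 1 = (n.+1%:R)^-1 :> R by [].
rewrite -[n.+2]addn1 natrD mulrDl divff ?mul1r ?(addrC 1) ?addrK //.
exact: lt0r_neq0.
Qed.

Lemma ln_le_harmonic n : ln n.+1%:R <= harmonic R n.
Proof.
elim: n => [|n IHn]; first by rewrite /harmonic big_ord0 mulr1n ln_1.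
rewrite harmonicS addrC; apply: le_trans (lerD (lexx _) IHn).
by rewrite -lerBlDr; apply: ln_natS_sub_le.
Qed.

Lemma ln_le_sum_harmonic m : m%:R * (ln m%:R - 1) <= \sum_(c < m) harmonic R c.+1.
Proof.
elim: m => [|m IHm]; first by rewrite mul0r big_ord0.
rewrite big_ord_recr /=.
have ln_step : m%:R * (ln m.+1%:R - ln m%:R) <= 1.
  case: m {IHm} => [|m]; first by rewrite mul0r ler01.
  have m1_gt0 : 0 < m.+1%:R :> R by rewrite ltr0n.
  rewrite -[X in _ <= X](mulfV (lt0r_neq0 m1_gt0)) ler_pM2l //.
  exact: ln_natS_sub_le.
have ln_le : ln m.+1%:R <= harmonic R m.+1 := le_trans (ln_le_harmonic m) (harmonic_leS _ _).
have -> : m.+1%:R * (ln m.+1%:R - 1) =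
    m%:R * (ln m%:R - 1) + (m%:R * (ln m.+1%:R - ln m%:R) - 1) + ln m.+1%:R :> R.
  by rewrite -natr1; ring.
rewrite -[\sum_(c < m) _]addr0; apply: lerD => //; apply: lerD => //.
by rewrite subr_le0.
Qed.

Lemma spanner_size_ge m d (T : eqType) (f : grid m d -> T) (Es : seq (T * T)) :
    (2 <= m)%N -> (0 < d)%N -> steiner_tc_spanner 2 f Es ->
  (m%:R * (ln m%:R - 1)) ^+ d <= 15 * 4 ^+ d * (size Es)%:R :> R.
Proof.
move=> m_ge2 d_gt0 spanner.
set S := \sum_(c < m) harmonic R c.+1.
have S_ge : 5 / 4 * m%:R <= S := sum_harmonic_ge R m_ge2.
have m_ge2R : 2 <= m%:R :> R by rewrite ler_nat.
have size_ge0 : 0 <= (size Es)%:R :> R := ler0n _ _.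
have four_d_ge1 : 1 <= 4 ^+ d :> R by rewrite exprn_ege1 // ler1n.
have Sd_le := total_weight_le_spanner_size R spanner.
rewrite total_weightE natrX -/S in Sd_le.
have md_le : m%:R ^+ d <= 4 / 5 * S ^+ d.
  have S_ge0 : 0 <= S by lra.
  apply: le_trans (_ : (4 / 5 * S) ^+ d <= _).
    by rewrite lerXn2r ?nnegrE ?ler0n //; lra.
  rewrite exprMn ler_wpM2r ?exprn_ge0 //.
  by rewrite -(prednK d_gt0) exprS ler_piMr ?exprn_ile1 //; lra.
have Sd_le15 : S ^+ d <= 15 * 4 ^+ d * (size Es)%:R.
  have : 0 <= (4 ^+ d - 1) * (size Es)%:R :> R by rewrite mulr_ge0 // subr_ge0.
  nra.
apply: le_trans Sd_le15; apply: le_trans (ler_norm _) _.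
rewrite normrX lerXn2r ?nnegrE ?normr_ge0 //; first by apply: le_trans S_ge; lra.
have ln_m_ge0 : 0 <= ln m%:R.
  rewrite -[0]ln_1; apply/RleP/Rlt_le/ln_increasing; first exact: Rlt_0_1.
  by apply/RltP; apply: lt_le_trans m_ge2R; rewrite ltr1n.
have : 0 <= m%:R * ln m%:R :> R by rewrite mulr_ge0 // ler0n.
have := ln_le_sum_harmonic m; rewrite -/S => le_S.
move=> m_ln_ge0; rewrite ler_norml le_S andbT; lra.
Qed.

Lemma scaled_pi_bound d (x z : R) :
  0 <= z -> x <= 15 * 4 ^+ d * z -> 15^-1 * x / (4 * PI) ^+ d <= z.
Proof.
move=> z_ge0 le_x; have /RltP := Rlt_trans _ _ _ PI2_1 PI2_Rlt_PI; rewrite R1E => PI_gt1.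
have pd_gt0 : 0 < (4 * PI) ^+ d by rewrite exprn_gt0 //; lra.
have : 4 ^+ d * z <= (4 * PI) ^+ d * z.
  by rewrite ler_wpM2r // lerXn2r ?nnegrE; lra.
rewrite ler_pdivrMr //; lra.
Qed.

(* With the mathcomp algebra loaded, the key [%R] would otherwise denote [ring_scope]. *)
Delimit Scope R_scope with R.
Local Close Scope ring_scope.

Theorem theorem1 :
  exists c : R, (0 < c)%R /\
  forall m d : nat, 2 <= m -> 1 <= d ->
  forall (T : eqType) (f : grid m d -> T) (Es : seq (T * T)),
    uniq Es -> steiner_tc_spanner 2 f Es ->
    (c * (INR m ^ d * (ln (INR m) - 1) ^ d) / (4 * PI) ^ d <= INR (size Es))%R.
Proof.
exists (/ 15)%R; split; first by apply/Rinv_0_lt_compat/IZR_lt.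
move=> m d m_ge2 d_ge1 T f Es _ spanner; apply/RleP; rewrite !RealsE /= -exprMn.
exact/scaled_pi_bound/(spanner_size_ge m_ge2 d_ge1 spanner)/ler0n.
Qed.
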